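(* Let $G$ be a $k$-cop-win graph and let $H$ be a 1-point retract of $G$. Then for all $m\geq 1$, $H$ is $k$-cop-win and $\mathrm{capt}_k(H,m)\leq \mathrm{capt}_k(G,m)$.
   Context: All graphs are finite, simple, connected and reflexive (a player may stay in place). A homomorphism $f:G\to H$ maps vertices to vertices so that adjacent (or equal) vertices go to adjacent (or equal) vertices. An induced subgraph $H$ of $G$ is a retract if there is a homomorphism $f:G\to H$ with $f(x)=x$ for all $x\in V(H)$; if $H=G-u$ for some vertex $u$, $H$ is a 1-point retract. The game of $k$ cops and $m$ robbers on $G$: in round 0 the cops first choose starting vertices, then the robbers choose theirs. In each round $i\geq 1$, all $k$ cops move (each to an adjacent vertex or staying), then all $m$ robbers move likewise. Several players may occupy the same vertex. Whenever a cop and some robbers occupy the same vertex, those robbers are captured and take no further part in the game. Both sides have full information. The cops win if all robbers are captured after finitely many rounds. $G$ is $k$-cop-win if $k$ cops can always win against one robber. For a $k$-cop-win graph $G$, $\mathrm{capt}_k(G,m)$ is the index of the round in which the last robber is captured when $k$ cops play to minimize this index and $m$ robbers play to maximize it. *)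

From mathcomp Require Import all_boot.
Set Implicit Arguments. Unset Strict Implicit. Unset Printing Implicit Defensive.

(* A graph is a finType V with a symmetric irreflexive edge relation adj;
   players may move along an edge or stay (reflexive graph). *)
Definition step {V : finType} (adj : rel V) (x y : V) : bool := (x == y) || adj x y.

(* Robbers' state: Some v = active robber at v, None = captured. *)
Definition capture {V : finType} {k m : nat} (c : {ffun 'I_k -> V})
    (r : {ffun 'I_m -> option V}) : {ffun 'I_m -> option V} :=
  [ffun j => if r j is Some y then (if [exists i, c i == y] then None else Some y)
             else None].

Definition all_captured {V : finType} {m : nat} (r : {ffun 'I_m -> option V}) : bool :=
  [forall j, r j == None].

Definition cop_move {V : finType} (adj : rel V) {k : nat} (c c' : {ffun 'I_k -> V}) : bool :=
  [forall i, step adj (c i) (c' i)].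

Definition rob_move {V : finType} (adj : rel V) {m : nat}
    (r r' : {ffun 'I_m -> option V}) : bool :=
  [forall j, match r j, r' j with
             | Some y, Some y' => step adj y y'
             | None, None => true
             | _, _ => false end].

(* cops_win_within adj n c r : in the state where cops stand at c, robbers at r
   (captures already applied) and the cops are about to move, the cops can
   force that all robbers are captured within n further rounds. *)
Fixpoint cops_win_within {V : finType} (adj : rel V) {k m : nat} (n : nat)
    (c : {ffun 'I_k -> V}) (r : {ffun 'I_m -> option V}) : bool :=
  all_captured r ||
  match n with
  | 0 => false
  | n'.+1 =>
      [exists c' : {ffun 'I_k -> V}, cop_move adj c c' &&
        [forall r' : {ffun 'I_m -> option V},
           rob_move adj (capture c' r) r' ==> cops_win_within adj n' c' (capture c' r')]]
  end.

(* k cops can guarantee that the last of m robbers is captured in a round of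
   index <= n (round 0 = initial placement). *)
Definition cops_guarantee {V : finType} (adj : rel V) (k m n : nat) : bool :=
  [exists c0 : {ffun 'I_k -> V}, [forall r0 : {ffun 'I_m -> V},
     cops_win_within adj n c0 (capture c0 [ffun j => Some (r0 j)])]].

Definition k_cop_win {V : finType} (adj : rel V) (k : nat) : Prop :=
  exists n, cops_guarantee adj k 1 n.

Definition is_capt {V : finType} (adj : rel V) (k m n : nat) : Prop :=
  cops_guarantee adj k m n /\ forall n', n' < n -> ~~ cops_guarantee adj k m n'.

Definition induced_del {T : finType} (e : rel T) (u : T) : rel {x : T | x != u} :=
  fun a b => e (val a) (val b).
Arguments induced_del {T} e u.

Definition is_hom {A B : finType} (eA : rel A) (eB : rel B) (f : A -> B) : Prop :=
  forall x y, eA x y -> f x = f y \/ eB (f x) (f y).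

Definition one_point_retract {T : finType} (e : rel T) (u : T) : Prop :=
  exists f : T -> {x : T | x != u},
    is_hom e (induced_del e u) f /\ forall a : {x : T | x != u}, f (val a) = a.

(** The cops play in H the image under the retraction f of a winning strategy
    in G, against the robbers' H-positions seen as G-positions.  Since f is a
    homomorphism fixing H, the image strategy is legal in H, and a robber is
    caught in H no later than the cop it is shadowing catches it in G.  Hence
    every capture-time bound valid in G is valid in H. *)
From mathcomp Require Import all_boot.
Set Implicit Arguments. Unset Strict Implicit. Unset Printing Implicit Defensive.

Section RetractShadow.

Variables (A B : finType) (eA : rel A) (eB : rel B) (f : A -> B) (g : B -> A).
Hypothesis f_step : {homo f : x y / step eA x y >-> step eB x y}.
Hypothesis g_step : {homo g : x y / step eB x y >-> step eA x y}.
Hypothesis gK : cancel g f.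

Definition shadows (m : nat) (rB : {ffun 'I_m -> option B})
    (rA : {ffun 'I_m -> option A}) : Prop :=
  forall j, rB j = None \/ rA j = omap g (rB j).

Lemma shadows_capture k m (c : {ffun 'I_k -> A}) rB rA :
  @shadows m rB rA -> shadows (capture [ffun i => f (c i)] rB) (capture c rA).
Proof.
move=> sh j; rewrite /capture !ffunE.
case: (sh j) => [-> | ]; first by left.
case: (rB j) => [y|] /= ->; last by left.
case: ifP => [_ | notB]; first by left.
case: ifP => [/existsP [i /eqP ci] | _]; last by right.
suff : [exists i0, [ffun i1 => f (c i1)] i0 == y] by rewrite notB.
by apply/existsP; exists i; rewrite ffunE ci gK.
Qed.

Lemma shadows_all_captured m rB rA :
  @shadows m rB rA -> all_captured rA -> all_captured rB.
Proof.
move=> sh /forallP capA; apply/forallP => j; case: (sh j) => [-> //|].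
by move/eqP: (capA j) => ->; case: (rB j).
Qed.

Lemma cop_move_map k (c c' : {ffun 'I_k -> A}) :
  cop_move eA c c' -> cop_move eB [ffun i => f (c i)] [ffun i => f (c' i)].
Proof. by move=> /forallP mv; apply/forallP => i; rewrite !ffunE f_step. Qed.

Lemma rob_move_lift m rB rA (rB' : {ffun 'I_m -> option B}) :
  @shadows m rB rA -> rob_move eB rB rB' ->
  exists2 rA', rob_move eA rA rA' & shadows rB' rA'.
Proof.
move=> sh /forallP mv.
exists [ffun j => if rB' j is Some y then Some (g y) else rA j].
  apply/forallP => j; rewrite ffunE; move: (mv j).
  case: (sh j) => [-> | ->].
    by case: (rB' j) => // _; case: (rA j) => // x; rewrite /step eqxx.
  by case: (rB j) => [y|] /=; case: (rB' j) => // y'; apply: g_step.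
by move=> j; rewrite ffunE; case: (rB' j) => [y|]; [right | left].
Qed.

Lemma cops_win_within_shadow k m n (c : {ffun 'I_k -> A}) rA rB :
  @shadows m rB rA -> cops_win_within eA n c rA ->
  cops_win_within eB n [ffun i => f (c i)] rB.
Proof.
elim: n c rA rB => [|n IH] c rA rB sh /=.
  by rewrite !orbF; apply: shadows_all_captured.
case/orP => [capA | /existsP [c' /andP [mv_c /forallP win]]].
  by rewrite (shadows_all_captured sh capA).
apply/orP; right; apply/existsP; exists [ffun i => f (c' i)].
rewrite cop_move_map //=; apply/forallP => rB'; apply/implyP => mv_r.
have [rA' mv_rA' sh'] := rob_move_lift (shadows_capture c' sh) mv_r.
apply: IH (shadows_capture c' sh') _.
by move/implyP: (win rA'); apply.
Qed.

Lemma cops_guarantee_retract k m n :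
  cops_guarantee eA k m n -> cops_guarantee eB k m n.
Proof.
case/existsP => c0 /forallP win; apply/existsP; exists [ffun i => f (c0 i)].
apply/forallP => r0; apply: cops_win_within_shadow (win [ffun j => g (r0 j)]).
by apply: shadows_capture => j; right; rewrite !ffunE.
Qed.

End RetractShadow.

Lemma step_hom (A B : finType) (eA : rel A) (eB : rel B) (f : A -> B) :
  is_hom eA eB f -> {homo f : x y / step eA x y >-> step eB x y}.
Proof.
move=> hom x y /orP [/eqP -> | /hom [-> | fxy]]; rewrite /step ?eqxx //.
by rewrite fxy orbT.
Qed.

Lemma cops_guarantee_one_point_retract (T : finType) (e : rel T) (u : T) k m n :
  one_point_retract e u ->
  cops_guarantee e k m n -> cops_guarantee (induced_del e u) k m n.
Proof.
case=> f [hom fK]; apply: (cops_guarantee_retract (step_hom hom) _ fK).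
by [].
Qed.

Lemma is_capt_le_guarantee (V : finType) (adj : rel V) k m n :
  cops_guarantee adj k m n -> exists2 n', is_capt adj k m n' & n' <= n.
Proof.
move=> win; have ex : exists n, cops_guarantee adj k m n by exists n.
exists (ex_minn ex); case: ex_minnP => n' win' min'; last exact: min'.
split=> // n'' lt_n''; apply/negP => win''.
by have := min' _ win''; rewrite leqNgt lt_n''.
Qed.

Theorem mainTheorem12 (T : finType) (e : rel T) (k : nat) (u : T) :
  symmetric e -> irreflexive e -> (forall x y : T, connect e x y) ->
  k_cop_win e k ->
  one_point_retract e u ->
  k_cop_win (induced_del e u) k /\
  (forall m : nat, 0 < m -> forall nG : nat, is_capt e k m nG ->
     exists2 nH : nat, is_capt (induced_del e u) k m nH & nH <= nG).
Proof.
move=> _ _ _ [n winG] retr; split.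
  by exists n; apply: cops_guarantee_one_point_retract winG.
move=> m _ nG [winG' _].
by apply: is_capt_le_guarantee; apply: cops_guarantee_one_point_retract winG'.
Qed.
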